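(* Let $OABC$ be a quadrilateral in the hyperbolic plane with right angles at $A$, $B$, $C$ and angle $\alpha\in(0,\pi/2)$ at $O$. Let $d$ be the length of $OA$, $L$ the length of $AB$, $\ell$ the length of $BC$, and let the length of $OC$ be $L+h$. Let $M$ be the point of the side $OC$ at hyperbolic distance $h$ from $O$ (equivalently, at distance $L$ from $C$). Place the quadrilateral in the Poincar\'e unit disc model with $O$ at the center of the disc, let $s$ be the Euclidean distance from $O$ to $A$ and $t$ the Euclidean distance from $O$ to $M$ (so that $d=\log\frac{1+s}{1-s}$ and $h=\log\frac{1+t}{1-t}$). Then \[ \tanh L=\frac{\cos\alpha}{\sin\alpha}\,\frac{1-s^2}{2s}\qquad\text{and}\qquad t=\frac{\cos\alpha}{\sin\alpha+1}\,s . \] *)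

From Stdlib Require Import Reals.
Open Scope R_scope.

Definition pt := (R * R)%type.

Definition cadd (z w : pt) : pt := (fst z + fst w, snd z + snd w).
Definition csub (z w : pt) : pt := (fst z - fst w, snd z - snd w).
Definition cmul (z w : pt) : pt :=
  (fst z * fst w - snd z * snd w, fst z * snd w + snd z * fst w).
Definition cconj (z : pt) : pt := (fst z, - snd z).
Definition cabs (z : pt) : R := sqrt (fst z * fst z + snd z * snd z).
Definition cone : pt := (1, 0).
Definition czero : pt := (0, 0).

Definition in_disc (z : pt) : Prop := cabs z < 1.

(* hyperbolic distance (curvature -1) in the Poincare disc model:
   d(z,w) = log((1+r)/(1-r)),  r = |z - w| / |1 - conj(w) z| *)
Definition hdist (z w : pt) : R :=
  let r := cabs (csub z w) / cabs (csub cone (cmul (cconj w) z)) in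
  ln ((1 + r) / (1 - r)).

(* m lies on the geodesic segment [p,q] (metric betweenness; the hyperbolic
   plane is uniquely geodesic) *)
Definition on_hseg (p q m : pt) : Prop :=
  hdist p m + hdist m q = hdist p q.

(* Euclidean tangent direction at p of the geodesic from p to q.
   The Moebius map phi_p(z) = (z - p)/(1 - conj(p) z) is a hyperbolic isometry
   sending p to 0 with phi_p'(p) = 1/(1-|p|^2) > 0, so the geodesic from p to q
   leaves p in the direction of phi_p(q) = (q-p)/(1-conj(p) q); we keep the
   positive multiple (q - p) * conj(1 - conj(p) q). *)
Definition tdir (p q : pt) : pt :=
  cmul (csub q p) (cconj (csub cone (cmul (cconj p) q))).

(* angle at p between the geodesics p->q and p->r (the model is conformal) *)
Definition hangle (p q r : pt) : R :=
  let u := tdir p q in let v := tdir p r in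
  acos (fst (cmul (cconj u) v) / (cabs u * cabs v)).

(* signed "turn" at p from direction towards q to direction towards r:
   the sign of sin of the oriented angle *)
Definition hturn (p q r : pt) : R := snd (cmul (cconj (tdir p q)) (tdir p r)).

(* O A B C (in this cyclic order) is a convex quadrilateral: its vertices are
   in the disc and at every vertex the oriented angle from the next vertex to
   the previous one has the same strict sign (all interior angles in (0,pi),
   consistently oriented). *)
Definition convex_quad (O A B C : pt) : Prop :=
  in_disc O /\ in_disc A /\ in_disc B /\ in_disc C /\
  ((0 < hturn O A C /\ 0 < hturn A B O /\ 0 < hturn B C A /\ 0 < hturn C O B) \/
   (hturn O A C < 0 /\ hturn A B O < 0 /\ hturn B C A < 0 /\ hturn C O B < 0)).

From Stdlib Require Import Reals Lra Nsatz.
Open Scope R_scope.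

(* With O at the centre, the geodesics AB and CB are circles orthogonal to the unit circle,
   centred on the rays OA and OC; the right angle at B says that these two circles are
   orthogonal, i.e. their centres have dot product 1.  With s = |A|, u = |C| and
   A.C = s u cos(alpha) this reads cos(alpha) (1 + s^2) (1 + u^2) = 4 s u.  Eliminating B
   with the planar Gram identity gives a quadratic equation for A.B, from which
   tanh L = 2 r / (1 + r^2), r = tanh (L/2), is computed.  Since the distance from the
   centre is 2 artanh of the Euclidean radius, h = OC - L turns into the tanh-subtraction
   t = (u - r) / (1 - u r), which evaluates to s cos(alpha) / (sin(alpha) + 1). *)

Lemma acos_eq_cos y a : 0 < a < PI -> acos y = a -> y = cos a.
Proof.
  intros Ha Hy.
  assert (Hdom : -1 < y < 1).
  { revert Hy; unfold acos.
    destruct (Rle_dec y (-1)); [lra|]; destruct (Rle_dec 1 y); lra. }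
  rewrite <- Hy, cos_acos; lra.
Qed.

Lemma cos_sq_add_sin_sq x : cos x * cos x + sin x * sin x = 1.
Proof. pose proof (sin2_cos2 x); unfold Rsqr in *; lra. Qed.

Lemma acute_cos_sin_bounds alpha : 0 < alpha < PI / 2 ->
  0 < cos alpha /\ 0 < sin alpha /\ 0 < cos alpha / (sin alpha + 1) < 1.
Proof.
  intros Ha.
  assert (Hc : 0 < cos alpha) by (apply cos_gt_0; lra).
  assert (Hs : 0 < sin alpha) by (apply sin_gt_0; pose proof PI_RGT_0; lra).
  assert (Hc1 : cos alpha < 1) by (pose proof (cos_sq_add_sin_sq alpha); nra).
  repeat split; trivial.
  - apply Rdiv_lt_0_compat; lra.
  - apply (Rmult_lt_reg_r (sin alpha + 1)); [lra|]; field_simplify; lra.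
Qed.

(* [hlen x = 2 artanh x], the hyperbolic distance from the centre to a point at Euclidean
   distance [x]; beyond the disc [ln] of a non-positive number makes it [0]. *)
Definition hlen (x : R) : R := ln ((1 + x) / (1 - x)).

Lemma hlen_add x y : -1 < x < 1 -> -1 < y < 1 ->
  hlen x + hlen y = hlen ((x + y) / (1 + x * y)).
Proof.
  intros Hx Hy; unfold hlen.
  assert (Hxy : 0 < 1 + x * y) by nra.
  rewrite <- ln_mult by (apply Rdiv_lt_0_compat; lra).
  f_equal; field; nra.
Qed.

Lemma hlen_inj x y : -1 < x < 1 -> -1 < y < 1 -> hlen x = hlen y -> x = y.
Proof.
  intros Hx Hy E; unfold hlen in E.
  apply ln_inv in E; try (apply Rdiv_lt_0_compat; lra).
  assert (E' : (1 + x) * (1 - y) = (1 + y) * (1 - x)).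
  { apply (Rmult_eq_reg_r (/ ((1 - x) * (1 - y)))).
    - transitivity ((1 + x) / (1 - x)); [field; lra|].
      rewrite E; field; lra.
    - apply Rinv_neq_0_compat; nra. }
  lra.
Qed.

Lemma hlen_gt0 x : 0 < x < 1 -> 0 < hlen x.
Proof.
  intros Hx; unfold hlen; rewrite <- ln_1.
  apply ln_increasing; [lra|].
  apply (Rmult_lt_reg_r (1 - x)); [lra|]; field_simplify; lra.
Qed.

Lemma hlen_ge1 x : 1 <= x -> hlen x = 0.
Proof.
  intros Hx; unfold hlen, ln.
  destruct (Rlt_dec 0 ((1 + x) / (1 - x))) as [Hpos|]; [exfalso|reflexivity].
  destruct (Req_dec x 1) as [->|Hne].
  - rewrite Rminus_diag, Rdiv_0_r in Hpos; lra.
  - assert (0 < (1 + x) / (x - 1)) by (apply Rdiv_lt_0_compat; lra).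
    replace ((1 + x) / (1 - x)) with (- ((1 + x) / (x - 1))) in Hpos
      by (field; split; lra).
    lra.
Qed.

Lemma hlen_eq_pos t x : 0 <= t -> 0 < x < 1 -> hlen t = hlen x -> t = x.
Proof.
  intros Ht Hx E.
  destruct (Rlt_le_dec t 1) as [Ht1|Ht1].
  - apply hlen_inj; lra.
  - rewrite hlen_ge1 in E by lra; pose proof (hlen_gt0 x Hx); lra.
Qed.

Lemma tanh_hlen x : -1 < x < 1 -> tanh (hlen x) = 2 * x / (1 + x * x).
Proof.
  intros Hx; unfold hlen, tanh, sinh, cosh.
  rewrite exp_Ropp, exp_ln by (apply Rdiv_lt_0_compat; lra).
  field; repeat split; nra.
Qed.

Lemma double_ratio_inj x y : -1 < x < 1 -> -1 < y < 1 ->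
  2 * x / (1 + x * x) = 2 * y / (1 + y * y) -> x = y.
Proof.
  intros Hx Hy E.
  assert (E' : (x - y) * (1 - x * y) = 0).
  { apply (Rmult_eq_reg_r (/ ((1 + x * x) * (1 + y * y)))).
    - transitivity ((2 * x / (1 + x * x) - 2 * y / (1 + y * y)) / 2); [field; nra|].
      rewrite E; field; nra.
    - apply Rinv_neq_0_compat; nra. }
  apply Rmult_integral in E' as [E'|E']; nra.
Qed.

Lemma sub_ratio_bound x y : -1 < x < 1 -> -1 < y < 1 -> -1 < (x - y) / (1 - x * y) < 1.
Proof.
  intros Hx Hy.
  assert (Hxy : 0 < 1 - x * y) by nra.
  split; apply (Rmult_lt_reg_r (1 - x * y)); trivial; field_simplify; nra.
Qed.

Lemma hlen_sub x y : -1 < x < 1 -> -1 < y < 1 ->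
  hlen x = hlen ((x - y) / (1 - x * y)) + hlen y.
Proof.
  intros Hx Hy.
  assert (Hxy : 0 < 1 - x * y) by nra.
  rewrite hlen_add by (try apply sub_ratio_bound; assumption).
  f_equal; field; split; nra.
Qed.

Definition dot (z w : pt) : R := fst z * fst w + snd z * snd w.

Definition cross (z w : pt) : R := fst z * snd w - snd z * fst w.

Lemma fst_cmul_cconj z w : fst (cmul (cconj z) w) = dot z w.
Proof. unfold cmul, cconj, dot; simpl; ring. Qed.

Lemma snd_cmul_cconj z w : snd (cmul (cconj z) w) = cross z w.
Proof. unfold cmul, cconj, cross; simpl; ring. Qed.

Lemma dot_comm z w : dot z w = dot w z.
Proof. unfold dot; ring. Qed.

Lemma cross_antisym z w : cross z w = - cross w z.
Proof. unfold cross; ring. Qed.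

Lemma dot_self_ge0 z : 0 <= dot z z.
Proof. unfold dot; nra. Qed.

Lemma dot_sq_add_cross_sq z w : dot z w * dot z w + cross z w * cross z w = dot z z * dot w w.
Proof. unfold dot, cross; ring. Qed.

Lemma gram_det_2d a b c :
  cross a c * cross a c * dot b b
  = dot a b * dot a b * dot c c - 2 * dot a b * dot c b * dot a c + dot c b * dot c b * dot a a.
Proof. unfold dot, cross; ring. Qed.

Lemma dot_eq0_of_normals u v n m :
  dot u v = 0 -> dot n u = 0 -> dot m v = 0 -> cross u v <> 0 -> dot n m = 0.
Proof.
  intros Huv Hn Hm Hc.
  assert (E : cross u v * dot n m = 0) by (unfold cross, dot in *; nsatz).
  apply Rmult_integral in E as [E|E]; [contradiction|exact E].
Qed.

Lemma cabs_sq z : cabs z * cabs z = dot z z.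
Proof. apply sqrt_sqrt, dot_self_ge0. Qed.

Lemma cabs_ge0 z : 0 <= cabs z.
Proof. apply sqrt_pos. Qed.

Lemma dot_self_lt1 z : in_disc z -> dot z z < 1.
Proof.
  unfold in_disc; intros Hz; rewrite <- cabs_sq.
  pose proof (cabs_ge0 z); nra.
Qed.

Lemma cabs_pos_of_cross z w : cross z w <> 0 -> 0 < cabs z.
Proof.
  intros Hzw; destruct (Rle_lt_or_eq_dec 0 (cabs z) (cabs_ge0 z)) as [|Z]; trivial.
  exfalso; apply Hzw.
  assert (Hzz : dot z z = 0) by (rewrite <- cabs_sq, <- Z; ring).
  pose proof (dot_sq_add_cross_sq z w) as E; rewrite Hzz, Rmult_0_l in E.
  pose proof (pow2_ge_0 (dot z w)); pose proof (pow2_ge_0 (cross z w)).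
  nra.
Qed.

Lemma cabs_csub_czero z : cabs (csub z czero) = cabs z.
Proof. unfold cabs, csub, czero; simpl; f_equal; ring. Qed.

Lemma tdir_czero q : tdir czero q = q.
Proof. destruct q; unfold tdir, cmul, csub, cconj, cone, czero; simpl; f_equal; ring. Qed.

Lemma convex_quad_czero a b c : convex_quad czero a b c ->
  in_disc a /\ in_disc b /\ in_disc c /\
  cross a c <> 0 /\ cross (tdir b c) (tdir b a) <> 0.
Proof.
  unfold convex_quad, hturn; rewrite !tdir_czero, !snd_cmul_cconj.
  intros (_ & Ha & Hb & Hc & Hturn).
  repeat split; trivial; destruct Hturn as [(H1 & _ & H3 & _)|(H1 & _ & H3 & _)]; lra.
Qed.

Lemma hangle_right p q r : hangle p q r = PI / 2 -> dot (tdir p q) (tdir p r) = 0.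
Proof.
  unfold hangle; rewrite fst_cmul_cconj.
  set (u := tdir p q); set (v := tdir p r); intros H.
  apply acos_eq_cos in H; [|pose proof PI_RGT_0; lra].
  rewrite cos_PI2 in H.
  destruct (Req_dec (cabs u * cabs v) 0) as [Z|Z].
  - assert (Huv : dot u u * dot v v = 0)
      by (rewrite <- cabs_sq, <- (cabs_sq v); nra).
    pose proof (dot_sq_add_cross_sq u v); nra.
  - apply Rmult_integral in H as [H|H]; [exact H|].
    exfalso; exact (Rinv_neq_0_compat _ Z H).
Qed.

Lemma hangle_czero q r alpha : 0 < alpha < PI -> cabs q <> 0 -> cabs r <> 0 ->
  hangle czero q r = alpha -> dot q r = cos alpha * (cabs q * cabs r).
Proof.
  unfold hangle; rewrite !tdir_czero, fst_cmul_cconj; intros Ha Hq Hr H.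
  apply acos_eq_cos in H; [rewrite <- H; field; split|]; assumption.
Qed.

Definition pseudo_dist (z w : pt) : R :=
  cabs (csub z w) / cabs (csub cone (cmul (cconj w) z)).

Lemma hdist_pseudo_dist z w : hdist z w = hlen (pseudo_dist z w).
Proof. reflexivity. Qed.

Lemma pseudo_dist_czero_l z : pseudo_dist czero z = cabs z.
Proof.
  unfold pseudo_dist, cabs, csub, cmul, cconj, cone, czero; simpl.
  replace ((1 - (fst z * 0 - - snd z * 0)) * (1 - (fst z * 0 - - snd z * 0))
           + (0 - (fst z * 0 + - snd z * 0)) * (0 - (fst z * 0 + - snd z * 0)))
    with 1 by ring.
  rewrite sqrt_1, Rdiv_1_r; f_equal; ring.
Qed.

Lemma hdist_czero_l z : hdist czero z = hlen (cabs z).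
Proof. rewrite hdist_pseudo_dist, pseudo_dist_czero_l; reflexivity. Qed.

Lemma pseudo_dist_sq z w : in_disc z -> in_disc w ->
  0 <= pseudo_dist z w < 1 /\ 0 < 1 - 2 * dot z w + dot z z * dot w w /\
  pseudo_dist z w ^ 2 * (1 - 2 * dot z w + dot z z * dot w w)
  = dot z z - 2 * dot z w + dot w w.
Proof.
  intros Hz Hw.
  apply dot_self_lt1 in Hz, Hw.
  set (X := dot z z - 2 * dot z w + dot w w).
  set (Y := 1 - 2 * dot z w + dot z z * dot w w).
  assert (HX : cabs (csub z w) = sqrt X).
  { unfold cabs, X, dot, csub; simpl; f_equal; ring. }
  assert (HY : cabs (csub cone (cmul (cconj w) z)) = sqrt Y).
  { unfold cabs, Y, dot, csub, cmul, cconj, cone; simpl; f_equal; ring. }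
  assert (HX0 : 0 <= X) by (pose proof (dot_self_ge0 (csub z w));
                           unfold X, dot, csub in *; simpl in *; nra).
  assert (HXY : X < Y) by (unfold X, Y; nra).
  assert (HsY : 0 < sqrt Y) by (apply sqrt_lt_R0; lra).
  assert (HsXY : sqrt X < sqrt Y) by (apply sqrt_lt_1_alt; lra).
  pose proof (sqrt_pos X).
  unfold pseudo_dist; rewrite HX, HY; repeat split.
  - unfold Rdiv; apply Rmult_le_pos; [lra|apply Rlt_le, Rinv_0_lt_compat; lra].
  - apply (Rmult_lt_reg_r (sqrt Y)); [lra|]; field_simplify; lra.
  - lra.
  - replace ((sqrt X / sqrt Y) ^ 2 * Y) with (sqrt X * sqrt X * (Y / (sqrt Y * sqrt Y)))
      by (field; lra).
    rewrite !sqrt_sqrt by lra; field; lra.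
Qed.

(* [b] lies on the geodesic through [a] perpendicular to the radius [Oa]: the circle
   orthogonal to the unit circle centred at [a (1 + |a|^2) / (2 |a|^2)]. *)
Definition perp_to_radius (a b : pt) : Prop :=
  dot a b * (1 + dot a a) = dot a a * (1 + dot b b).

(* [2 |a|^2] times the vector from that centre to [b]. *)
Definition perp_normal (a b : pt) : pt :=
  (2 * dot a a * fst b - (1 + dot a a) * fst a,
   2 * dot a a * snd b - (1 + dot a a) * snd a).

Lemma perp_to_radius_of_right_angle a b :
  dot (tdir a czero) (tdir a b) = 0 -> perp_to_radius a b.
Proof.
  destruct a, b; unfold perp_to_radius, dot, tdir, cmul, csub, cconj, cone, czero; simpl.
  intros; nsatz.
Qed.

Lemma perp_normal_tdir a b : perp_to_radius a b -> dot (perp_normal a b) (tdir b a) = 0.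
Proof.
  destruct a, b; unfold perp_to_radius, perp_normal, dot, tdir, cmul, csub, cconj, cone;
    simpl; intros; nsatz.
Qed.

(* Orthogonal tangents at [b] mean orthogonal normals there, and for circles orthogonal to the
   unit circle this says that the centres have dot product 1. *)
Lemma perp_to_radius_orthogonal a b c :
  perp_to_radius a b -> perp_to_radius c b ->
  dot (tdir b a) (tdir b c) = 0 -> cross (tdir b a) (tdir b c) <> 0 ->
  dot a c * (1 + dot a a) * (1 + dot c c) = 4 * dot a a * dot c c.
Proof.
  intros Hab Hcb Hright Htrans.
  pose proof (dot_eq0_of_normals _ _ _ _ Hright (perp_normal_tdir _ _ Hab)
                (perp_normal_tdir _ _ Hcb) Htrans) as Hnormals.
  revert Hab Hcb Hnormals; destruct a, b, c;
    unfold perp_to_radius, perp_normal, dot; simpl; intros; nsatz.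
Qed.

Lemma pseudo_dist_perp_to_radius a b : in_disc a -> in_disc b -> perp_to_radius a b ->
  0 <= pseudo_dist a b < 1 /\ 0 < 1 - dot a b /\
  pseudo_dist a b * pseudo_dist a b * dot a a * (1 - dot a b) = dot a b - dot a a.
Proof.
  intros Ha Hb Hab.
  pose proof (dot_self_lt1 a Ha) as Ha1; pose proof (dot_self_ge0 a).
  destruct (pseudo_dist_sq a b Ha Hb) as (Hr & HY & Hr2).
  unfold perp_to_radius in Hab.
  assert (EY : 1 - 2 * dot a b + dot a a * dot b b = (1 - dot a a) * (1 - dot a b)) by nra.
  assert (EX : dot a a * (dot a a - 2 * dot a b + dot b b)
               = (1 - dot a a) * (dot a b - dot a a)) by nra.
  split; [exact Hr|split; [nra|]].
  apply (Rmult_eq_reg_l (1 - dot a a)); [|lra].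
  rewrite <- EX, <- Hr2, EY; ring.
Qed.

(* With [s = |A|], [u = |C|], [P = A.B], [Q = C.B], [beta = |B|^2] and [ca], [sa] the cosine
   and sine of the angle at [O]: the two circle equations, the radii relation and the planar
   Gram identity for [A], [B], [C] pin down [P]. *)
Lemma lambert_dot_relation s u ca sa P Q beta : 0 < s -> 0 < u ->
  P * (1 + s * s) = s * s * (1 + beta) -> Q * (1 + u * u) = u * u * (1 + beta) ->
  ca * (1 + s * s) * (1 + u * u) = 4 * s * u ->
  beta * (s * s) * (u * u) * (sa * sa)
  = P * P * (u * u) - 2 * P * Q * (s * u * ca) + Q * Q * (s * s) ->
  ca * ca + sa * sa = 1 ->
  ca * ca * ((1 - s * s) * (1 - s * s) * (1 - s * s) * (1 - s * s)) * (P * P)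
  = 16 * (sa * sa) * (s * s * s * s) * (P - s * s) * (1 - P).
Proof.
  intros Hs Hu HP HQ Hcos Hgram Hpyth.
  assert (HQP : u * (4 * s * s * s * Q - u * ca * P * ((1 + s * s) * (1 + s * s))) = 0)
    by nsatz.
  apply Rmult_integral in HQP as [|HQP]; [lra|].
  assert (E : u * u * s * s *
              (ca * ca * ((1 - s * s) * (1 - s * s) * (1 - s * s) * (1 - s * s)) * (P * P)
               - 16 * (sa * sa) * (s * s * s * s) * (P - s * s) * (1 - P)) = 0) by nsatz.
  assert (Hus : 0 < u * u * s * s) by (repeat apply Rmult_lt_0_compat; lra).
  apply Rmult_integral in E as [E|E]; lra.
Qed.

Lemma double_ratio_of_dot_relation s ca sa r P :
  0 < s < 1 -> 0 < ca -> 0 < sa -> 0 <= r -> 0 < 1 - P ->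
  r * r * (s * s) * (1 - P) = P - s * s ->
  ca * ca * ((1 - s * s) * (1 - s * s) * (1 - s * s) * (1 - s * s)) * (P * P)
  = 16 * (sa * sa) * (s * s * s * s) * (P - s * s) * (1 - P) ->
  2 * r / (1 + r * r) = ca / sa * ((1 - s ^ 2) / (2 * s)).
Proof.
  intros Hs Hca Hsa Hr HP Hr2 HPrel.
  assert (HPs : s * s <= P) by nra.
  set (X := P * (1 - s * s) * (2 * s * sa)).
  assert (HX : 0 < X) by (unfold X; repeat apply Rmult_lt_0_compat; nra).
  set (D := 2 * r / (1 + r * r)); set (T := ca / sa * ((1 - s ^ 2) / (2 * s))).
  assert (HDX : D * X = 2 * r * (s * s) * (1 - P) * (2 * s * sa)).
  { assert (E : s * s * (1 - P) * (1 + r * r) = P * (1 - s * s)) by nra.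
    unfold D, X; rewrite <- E; field; nra. }
  assert (HTX : T * X = ca * ((1 - s * s) * (1 - s * s)) * P) by (unfold T, X; field; lra).
  assert (HD : 0 <= D).
  { unfold D; apply Rmult_le_pos; [lra|]; apply Rlt_le, Rinv_0_lt_compat; nra. }
  assert (HT : 0 <= T * X) by (rewrite HTX; apply Rmult_le_pos; [apply Rmult_le_pos|]; nra).
  assert (Hsq : (D * X) * (D * X) = (T * X) * (T * X))
    by (rewrite HDX, HTX; clear - Hr2 HPrel; nsatz).
  assert (E : D * X = T * X) by (apply Rsqr_inj; [nra|exact HT|exact Hsq]).
  apply Rmult_eq_reg_r in E; lra.
Qed.

Lemma double_ratio_lambert_root s u ca sa : 0 < s < 1 -> 0 < u < 1 -> 0 < ca -> 0 < sa ->
  ca * ca + sa * sa = 1 -> ca * (1 + s * s) * (1 + u * u) = 4 * s * u ->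
  let K := ca / (sa + 1) * s in
  let r := (u - K) / (1 - u * K) in
  2 * r / (1 + r * r) = ca / sa * ((1 - s ^ 2) / (2 * s)).
Proof.
  intros Hs Hu Hca Hsa Hpyth Hcos K r.
  assert (Hca1 : ca < 1) by nra.
  assert (HD : 0 < sa + 1 - u * ca * s).
  { assert (u * ca * s < 1) by (clear - Hs Hu Hca Hca1;
      assert (u * ca < 1) by nra; assert (0 < u * ca) by nra; nra).
    lra. }
  assert (Hr : r = (u * (sa + 1) - ca * s) / (sa + 1 - u * ca * s))
    by (unfold r, K; field; lra).
  assert (Hpoly : ca * (1 - s * s) * ((u * (sa + 1) - ca * s) * (u * (sa + 1) - ca * s)
                    + (sa + 1 - u * ca * s) * (sa + 1 - u * ca * s))
                  = 4 * s * sa * (u * (sa + 1) - ca * s) * (sa + 1 - u * ca * s))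
    by (clear - Hpyth Hcos; nsatz).
  rewrite Hr; clearbody K r; clear Hr.
  revert Hpoly HD; generalize (u * (sa + 1) - ca * s) (sa + 1 - u * ca * s).
  intros N D Hpoly HD.
  assert (HND : 0 < N * N + D * D) by nra.
  transitivity (2 * N * D / (N * N + D * D)); [field; lra|].
  replace (2 * N * D) with (ca * (1 - s * s) * (N * N + D * D) / (2 * s * sa))
    by (rewrite Hpoly; field; lra).
  field; lra.
Qed.

Section LambertQuadrilateral.

Variables (a b c : pt) (alpha : R).
Hypotheses (Ha : in_disc a) (Hb : in_disc b) (Hc : in_disc c)
  (Hac : cross a c <> 0) (Hbca : cross (tdir b c) (tdir b a) <> 0)
  (HrA : hangle a czero b = PI / 2) (HrB : hangle b a c = PI / 2)
  (HrC : hangle c b czero = PI / 2)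
  (Halpha : 0 < alpha < PI / 2) (HO : hangle czero a c = alpha).

Lemma perp_to_radius_ab : perp_to_radius a b.
Proof. exact (perp_to_radius_of_right_angle _ _ (hangle_right _ _ _ HrA)). Qed.

Lemma perp_to_radius_cb : perp_to_radius c b.
Proof.
  apply perp_to_radius_of_right_angle; rewrite dot_comm; exact (hangle_right _ _ _ HrC).
Qed.

Lemma cabs_a_bounds : 0 < cabs a < 1.
Proof. split; [exact (cabs_pos_of_cross _ _ Hac)|exact Ha]. Qed.

Lemma cabs_c_bounds : 0 < cabs c < 1.
Proof.
  split; [|exact Hc]; apply (cabs_pos_of_cross _ a); rewrite cross_antisym; lra.
Qed.

Lemma dot_a_c : dot a c = cos alpha * (cabs a * cabs c).
Proof.
  pose proof cabs_a_bounds; pose proof cabs_c_bounds.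
  apply hangle_czero; trivial; try lra; pose proof PI_RGT_0; lra.
Qed.

Lemma lambert_radii_relation :
  cos alpha * (1 + cabs a * cabs a) * (1 + cabs c * cabs c) = 4 * cabs a * cabs c.
Proof.
  pose proof cabs_a_bounds; pose proof cabs_c_bounds.
  pose proof (hangle_right _ _ _ HrB) as Hright.
  assert (Htrans : cross (tdir b a) (tdir b c) <> 0) by (rewrite cross_antisym; lra).
  pose proof (perp_to_radius_orthogonal a b c perp_to_radius_ab perp_to_radius_cb
                Hright Htrans) as E.
  rewrite dot_a_c, <- !cabs_sq in E.
  apply (Rmult_eq_reg_l (cabs a * cabs c)); [|nra].
  transitivity (cos alpha * (cabs a * cabs c) * (1 + cabs a * cabs a) * (1 + cabs c * cabs c));
    [ring|rewrite E; ring].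
Qed.

Lemma lambert_gram_relation :
  dot b b * (cabs a * cabs a) * (cabs c * cabs c) * (sin alpha * sin alpha)
  = dot a b * dot a b * (cabs c * cabs c)
    - 2 * dot a b * dot c b * (cabs a * cabs c * cos alpha)
    + dot c b * dot c b * (cabs a * cabs a).
Proof.
  pose proof (gram_det_2d a b c) as G; pose proof (dot_sq_add_cross_sq a c) as Lg.
  pose proof (cos_sq_add_sin_sq alpha) as Hpyth.
  rewrite dot_a_c, <- (cabs_sq a), <- (cabs_sq c) in Lg, G.
  clear - G Lg Hpyth; nsatz.
Qed.

Lemma tanh_hdist_ab :
  tanh (hdist a b) = cos alpha / sin alpha * ((1 - cabs a ^ 2) / (2 * cabs a)).
Proof.
  destruct (acute_cos_sin_bounds alpha Halpha) as (Hca & Hsa & _).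
  pose proof cabs_a_bounds; pose proof cabs_c_bounds.
  destruct (pseudo_dist_perp_to_radius a b Ha Hb perp_to_radius_ab) as (Hr & HP & Hr2).
  rewrite hdist_pseudo_dist, tanh_hlen by lra.
  apply (double_ratio_of_dot_relation _ _ _ _ (dot a b)); try lra.
  { rewrite cabs_sq; lra. }
  rewrite cabs_sq.
  pose proof perp_to_radius_ab as Hab; pose proof perp_to_radius_cb as Hcb.
  unfold perp_to_radius in Hab, Hcb.
  rewrite <- (cabs_sq a) in Hab; rewrite <- (cabs_sq c) in Hcb.
  rewrite <- (cabs_sq a).
  apply (lambert_dot_relation _ (cabs c) _ _ _ (dot c b) (dot b b)); try lra; trivial.
  - exact lambert_radii_relation.
  - exact lambert_gram_relation.
  - exact (cos_sq_add_sin_sq alpha).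
Qed.

Lemma hdist_czero_c :
  hdist czero c = hdist a b + hlen (cos alpha / (sin alpha + 1) * cabs a).
Proof.
  destruct (acute_cos_sin_bounds alpha Halpha) as (Hca & Hsa & HK).
  pose proof cabs_a_bounds as Hs; pose proof cabs_c_bounds as Hu.
  set (K := cos alpha / (sin alpha + 1) * cabs a).
  assert (HK1 : 0 < K < 1) by (unfold K; split; nra).
  pose proof (double_ratio_lambert_root (cabs a) (cabs c) (cos alpha) (sin alpha) Hs Hu Hca Hsa
                (cos_sq_add_sin_sq alpha) lambert_radii_relation) as Hroot.
  cbv zeta in Hroot; fold K in Hroot.
  destruct (pseudo_dist_perp_to_radius a b Ha Hb perp_to_radius_ab) as (Hr & _).
  (* [tanh (L / 2)] and [(u - K) / (1 - u K)] have the same double ratio [tanh L]. *)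
  assert (Hrr : pseudo_dist a b = (cabs c - K) / (1 - cabs c * K)).
  { apply double_ratio_inj; [lra|apply sub_ratio_bound; lra|].
    rewrite Hroot, <- tanh_hdist_ab, hdist_pseudo_dist, tanh_hlen by lra; reflexivity. }
  rewrite hdist_czero_l, hdist_pseudo_dist, Hrr; apply hlen_sub; lra.
Qed.

End LambertQuadrilateral.

Theorem mainTheorem1 (O A B C M : pt) (alpha d L ell h s t : R) :
  O = czero ->
  convex_quad O A B C ->
  hangle A O B = PI / 2 ->
  hangle B A C = PI / 2 ->
  hangle C B O = PI / 2 ->
  0 < alpha < PI / 2 ->
  hangle O A C = alpha ->
  hdist O A = d ->
  hdist A B = L ->
  hdist B C = ell ->
  hdist O C = L + h ->
  on_hseg O C M ->
  hdist O M = h ->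
  s = cabs (csub A O) ->
  t = cabs (csub M O) ->
  tanh L = cos alpha / sin alpha * ((1 - s ^ 2) / (2 * s)) /\
  t = cos alpha / (sin alpha + 1) * s.
Proof.
  intros -> Hquad HrA HrB HrC Halpha HO _ HL _ HOC _ HM -> ->.
  rewrite !cabs_csub_czero.
  destruct (convex_quad_czero A B C Hquad) as (Ha & Hb & Hc & Hac & Hbca).
  pose proof (tanh_hdist_ab A B C alpha Ha Hb Hc Hac Hbca HrA HrB HrC Halpha HO) as Htanh.
  pose proof (hdist_czero_c A B C alpha Ha Hb Hc Hac Hbca HrA HrB HrC Halpha HO) as Hsplit.
  split; [rewrite <- HL; exact Htanh|].
  destruct (acute_cos_sin_bounds alpha Halpha) as (_ & _ & HK).
  pose proof (cabs_a_bounds A C Ha Hac).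
  apply hlen_eq_pos; [apply cabs_ge0|split; nra|].
  rewrite <- hdist_czero_l; lra.
Qed.
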